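(* Let $\lambda>0$, let $q:\mathbb{R}\to\mathbb{R}$ be infinitely differentiable and strictly positive, let $x(t)=\int_0^t\sqrt{q(u)}\,du$, and assume $x$ maps $\mathbb{R}$ onto $\mathbb{R}$ (with inverse $t(x)$). Let $p(x)=2\{t,x\}$. Suppose $\sigma\in L^1(\mathbb{R})\cap C(\mathbb{R})$ satisfies $$\sigma(x)=S[T\sigma](x)+p(x)\quad\text{for all }x\in\mathbb{R}.$$ Let $\delta(x)=T\sigma(x)=\frac1{4\lambda}\int_{\mathbb{R}}\sin(2\lambda|x-y|)\sigma(y)\,dy$ and $$\alpha(t)=\lambda\int_0^t\sqrt{q(u)}\exp\!\left(\tfrac{\delta(x(u))}{2}\right)du .$$ Then: (1) $\delta$ is a $C^2$ solution on $\mathbb{R}$ of $\ \delta''(x)-\frac14(\delta'(x))^2+4\lambda^2\left(e^{\delta(x)}-1\right)=p(x)$; (2) the function $\tilde\delta(t)=\delta(x(t))$ is a $C^2$ solution on $\mathbb{R}$ of $$\tilde\delta''(t)-\frac{q'(t)}{2q(t)}\tilde\delta'(t)-\frac14(\tilde\delta'(t))^2+4\lambda^2q(t)\left(e^{\tilde\delta(t)}-1\right)=q(t)\tilde p(t),\qquad \tilde p(t)=\frac{1}{q(t)}\left(\frac54\left(\frac{q'(t)}{q(t)}\right)^2-\frac{q''(t)}{q(t)}\right);$$ (3) $\alpha$ is a $C^3$ solution on $\mathbb{R}$ of Kummer's equation $$(\alpha'(t))^2=\lambda^2q(t)-\frac12\frac{\alpha'''(t)}{\alpha'(t)}+\frac34\left(\frac{\alpha''(t)}{\alpha'(t)}\right)^2;$$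 (4) $\alpha$ is a phase function for $y''(t)+\lambda^2q(t)y(t)=0$ on $[0,1]$.
   Context: The Schwarzian derivative of $f$ with respect to $s$ is $\{f,s\}=\frac{f'''}{f'}-\frac32\left(\frac{f''}{f'}\right)^2$; one has $p(x(t))=\tilde p(t)$. For $f\in C^1(\mathbb{R})$, $S[f](x)=\frac14(f'(x))^2-4\lambda^2\left(e^{f(x)}-1-f(x)\right)$. A sufficiently smooth $\alpha:[0,1]\to\mathbb{R}$ is a phase function for $y''+\lambda^2 q y=0$ on $[0,1]$ if $u=\cos(\alpha)/|\alpha'|^{1/2}$ and $v=\sin(\alpha)/|\alpha'|^{1/2}$ form a basis of the solution space of that equation on $[0,1]$. *)

From Stdlib Require Import Reals.
Open Scope R_scope.

Definition is_deriv (f f' : R -> R) : Prop :=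
  forall x, derivable_pt_lim f x (f' x).

Definition smooth (f : R -> R) : Prop :=
  exists D : nat -> R -> R, D 0%nat = f /\
    forall n x, derivable_pt_lim (D n) x (D (S n) x).

Definition RInt_val (f : R -> R) (a b v : R) : Prop :=
  exists pr : Riemann_integrable f a b, RiemannInt pr = v.

Definition improper_integral (f : R -> R) (v : R) : Prop :=
  forall eps, eps > 0 -> exists M, forall a b, a <= - M -> M <= b ->
    exists w, RInt_val f a b w /\ Rabs (w - v) < eps.

(* L^1(R) for (continuous) functions: |f| has a convergent improper integral *)
Definition L1 (f : R -> R) : Prop :=
  exists v, improper_integral (fun y => Rabs (f y)) v.

(* Schwarzian derivative {f,s} given f', f'', f''' *)
Definition schwarzian (f1 f2 f3 : R -> R) (s : R) : R :=
  f3 s / f1 s - 3 / 2 * (f2 s / f1 s) ^ 2.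

Definition S_op (lam : R) (f f1 : R -> R) (x : R) : R :=
  1 / 4 * (f1 x) ^ 2 - 4 * lam ^ 2 * (exp (f x) - 1 - f x).

Definition deriv_within (a b : R) (f f' : R -> R) : Prop :=
  forall t, a <= t <= b -> forall eps, eps > 0 -> exists del, del > 0 /\
    forall h, h <> 0 -> Rabs h < del -> a <= t + h <= b ->
      Rabs ((f (t + h) - f t) / h - f' t) < eps.

Definition sol01 (lam : R) (q y : R -> R) : Prop :=
  exists y1 y2, deriv_within 0 1 y y1 /\ deriv_within 0 1 y1 y2 /\
    forall t, 0 <= t <= 1 -> y2 t + lam ^ 2 * q t * y t = 0.

Definition basis01 (lam : R) (q u v : R -> R) : Prop :=
  sol01 lam q u /\ sol01 lam q v /\
  (forall c1 c2, (forall t, 0 <= t <= 1 -> c1 * u t + c2 * v t = 0) ->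
     c1 = 0 /\ c2 = 0) /\
  (forall y, sol01 lam q y -> exists c1 c2,
     forall t, 0 <= t <= 1 -> y t = c1 * u t + c2 * v t).

Definition phase_function (lam : R) (q alpha : R -> R) : Prop :=
  exists a1, is_deriv alpha a1 /\
    basis01 lam q (fun t => cos (alpha t) / sqrt (Rabs (a1 t)))
                  (fun t => sin (alpha t) / sqrt (Rabs (a1 t))).

From Pilot Require Import Defs.
From Stdlib Require Import Reals Lra FunctionalExtensionality.
From Coquelicot Require Import Coquelicot.
(* Coquelicot also exports an [RInt_val]; re-importing makes the one of [Defs] win. *)
Import Defs.
Open Scope R_scope.

(* By the addition formula for [sin (2 lam |x - y|)], the integral [T sigma] is a
   combination of [sin (2 lam x)] and [cos (2 lam x)] whose coefficients are the
   moments [int_0^x cos (2 lam y) sigma y dy], [int_0^x sin (2 lam y) sigma y dy]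
   up to constants (the limits of the tails of the improper integral). Hence
   [delta'' = sigma - 4 lam^2 delta], which together with [sigma = S[delta] + p]
   is (1). Composing with [x(t)], whose derivative is [sqrt q], turns (1) into
   (2), because [2 {t, x}] evaluated at [x(t)] is the explicit expression
   [p~(t)] in [q]. The logarithmic derivative of [alpha' = lam sqrt q e^(delta~/2)]
   is [g = q'/(2q) + delta~'/2], in terms of which Kummer's equation reads
   [alpha'^2 = lam^2 q + g^2/4 - g'/2]; by (2) this is (3). Finally, for any
   [alpha] with [alpha' > 0] solving Kummer's equation, [cos alpha / sqrt alpha']
   and [sin alpha / sqrt alpha'] solve [y'' + lam^2 q y = 0] with Wronskian 1,
   which makes them a basis of the solutions on [[0, 1]]: this is (4). *)

(* The Stdlib rules for [derivable_pt_lim] and [continuity_pt] are stated for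
   [mult_fct], [comp], ...; these restatements on explicit lambda-terms are
   what lets [apply] decompose a concrete expression. *)
Lemma dl_eq f x l l' : derivable_pt_lim f x l -> l = l' -> derivable_pt_lim f x l'.
Proof. now intros H <-. Qed.
Lemma dl_ext f g x l : (forall t, f t = g t) -> derivable_pt_lim f x l -> derivable_pt_lim g x l.
Proof. intros E; replace g with f by (apply functional_extensionality; auto); auto. Qed.
Lemma dl_const c x : derivable_pt_lim (fun _ => c) x 0.
Proof. apply derivable_pt_lim_const. Qed.
Lemma dl_id x : derivable_pt_lim (fun t => t) x 1.
Proof. apply derivable_pt_lim_id. Qed.
Lemma dl_plus f g f' g' x : derivable_pt_lim f x f' -> derivable_pt_lim g x g' ->
  derivable_pt_lim (fun t => f t + g t) x (f' + g').
Proof. apply derivable_pt_lim_plus. Qed.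
Lemma dl_minus f g f' g' x : derivable_pt_lim f x f' -> derivable_pt_lim g x g' ->
  derivable_pt_lim (fun t => f t - g t) x (f' - g').
Proof. apply derivable_pt_lim_minus. Qed.
Lemma dl_opp f f' x : derivable_pt_lim f x f' -> derivable_pt_lim (fun t => - f t) x (- f').
Proof. apply derivable_pt_lim_opp. Qed.
Lemma dl_mult f g f' g' x : derivable_pt_lim f x f' -> derivable_pt_lim g x g' ->
  derivable_pt_lim (fun t => f t * g t) x (f' * g x + f x * g').
Proof. apply derivable_pt_lim_mult. Qed.
Lemma dl_comp f g f' g' x : derivable_pt_lim f x f' -> derivable_pt_lim g (f x) g' ->
  derivable_pt_lim (fun t => g (f t)) x (g' * f').
Proof. apply derivable_pt_lim_comp. Qed.
Lemma dl_inv f f' x : derivable_pt_lim f x f' -> f x <> 0 ->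
  derivable_pt_lim (fun t => / f t) x (- f' / f x ^ 2).
Proof. intros; apply is_derive_Reals, is_derive_inv; [apply is_derive_Reals|]; auto. Qed.
Lemma dl_exp f f' x : derivable_pt_lim f x f' ->
  derivable_pt_lim (fun t => exp (f t)) x (exp (f x) * f').
Proof. intros; apply (dl_comp f exp); auto; apply derivable_pt_lim_exp. Qed.
Lemma dl_sin f f' x : derivable_pt_lim f x f' ->
  derivable_pt_lim (fun t => sin (f t)) x (cos (f x) * f').
Proof. intros; apply (dl_comp f sin); auto; apply derivable_pt_lim_sin. Qed.
Lemma dl_cos f f' x : derivable_pt_lim f x f' ->
  derivable_pt_lim (fun t => cos (f t)) x (- sin (f x) * f').
Proof. intros; apply (dl_comp f cos); auto; apply derivable_pt_lim_cos. Qed.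
Lemma dl_sqrt f f' x : derivable_pt_lim f x f' -> 0 < f x ->
  derivable_pt_lim (fun t => sqrt (f t)) x (/ (2 * sqrt (f x)) * f').
Proof. intros; apply (dl_comp f sqrt); auto; apply derivable_pt_lim_sqrt; auto. Qed.

Ltac dl_auto :=
  repeat first
    [ match goal with
      | H : forall _, derivable_pt_lim ?f _ _ |- derivable_pt_lim ?f _ _ => apply H
      | H : is_deriv ?f _ |- derivable_pt_lim ?f _ _ => apply H
      end
    | apply dl_const | apply dl_id | apply dl_minus | apply dl_plus | apply dl_mult
    | apply dl_opp | apply dl_sin | apply dl_cos | apply dl_exp | apply dl_sqrt | apply dl_inv ].

Lemma cont_of_dl f x l : derivable_pt_lim f x l -> continuity_pt f x.
Proof. intros H; apply derivable_continuous_pt; exists l; exact H. Qed.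
Lemma cont_const c x : continuity_pt (fun _ => c) x.
Proof. apply continuity_pt_const; intros ? ?; auto. Qed.
Lemma cont_id x : continuity_pt (fun t => t) x.
Proof. apply continuity_pt_id. Qed.
Lemma cont_plus f g x : continuity_pt f x -> continuity_pt g x ->
  continuity_pt (fun t => f t + g t) x.
Proof. apply continuity_pt_plus. Qed.
Lemma cont_minus f g x : continuity_pt f x -> continuity_pt g x ->
  continuity_pt (fun t => f t - g t) x.
Proof. apply continuity_pt_minus. Qed.
Lemma cont_mult f g x : continuity_pt f x -> continuity_pt g x ->
  continuity_pt (fun t => f t * g t) x.
Proof. apply continuity_pt_mult. Qed.
Lemma cont_comp f g x : continuity_pt f x -> continuity_pt g (f x) ->
  continuity_pt (fun t => g (f t)) x.
Proof. apply continuity_pt_comp. Qed.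
Lemma cont_inv f x : continuity_pt f x -> f x <> 0 -> continuity_pt (fun t => / f t) x.
Proof. apply continuity_pt_inv. Qed.
Lemma cont_sin f x : continuity_pt f x -> continuity_pt (fun t => sin (f t)) x.
Proof. intros; apply cont_comp; auto; apply continuity_sin. Qed.
Lemma cont_cos f x : continuity_pt f x -> continuity_pt (fun t => cos (f t)) x.
Proof. intros; apply cont_comp; auto; apply continuity_cos. Qed.
Lemma cont_exp f x : continuity_pt f x -> continuity_pt (fun t => exp (f t)) x.
Proof. intros; apply cont_comp; auto; apply (cont_of_dl _ _ _ (derivable_pt_lim_exp _)). Qed.
Lemma cont_abs f x : continuity_pt f x -> continuity_pt (fun t => Rabs (f t)) x.
Proof. intros; apply cont_comp; auto; apply Rcontinuity_abs. Qed.

Ltac cont_auto :=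
  repeat first
    [ apply cont_const | apply cont_id | apply cont_minus | apply cont_plus | apply cont_mult
    | apply cont_sin | apply cont_cos | apply cont_exp | apply cont_abs | apply cont_inv
    | match goal with
      | H : continuity ?f |- continuity_pt ?f _ => apply H
      | H : forall _, derivable_pt_lim ?f _ _ |- continuity_pt ?f ?x =>
          apply (cont_of_dl _ _ _ (H x))
      | H : is_deriv ?f _ |- continuity_pt ?f ?x => apply (cont_of_dl _ _ _ (H x))
      end ].

(* Turns [x] into the square of the atom [s := sqrt x], which [field] cannot do itself. *)
Ltac sqrt_subst x Hx :=
  let Hp := fresh in let Hs := fresh in
  pose proof (sqrt_lt_R0 x Hx) as Hp; pose proof (sqrt_sqrt x (Rlt_le 0 x Hx)) as Hs;
  set (s := sqrt x) in *; try rewrite <- Hs; clear Hs.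

Lemma RInt_val_RInt f a b w : RInt_val f a b w -> w = RInt f a b.
Proof. intros [pr <-]; symmetry; apply RInt_Reals. Qed.

Lemma ex_RInt_continuity f a b : continuity f -> ex_RInt f a b.
Proof.
  intros Hf; apply (ex_RInt_continuous (V := R_CompleteNormedModule)).
  intros z _; apply continuity_pt_filterlim, Hf.
Qed.

Lemma dl_RInt f x : continuity f -> derivable_pt_lim (fun t => RInt f 0 t) x (f x).
Proof.
  intros Hf; apply is_derive_Reals, (is_derive_RInt f _ 0 x).
  - apply filter_forall; intros b.
    apply (RInt_correct (V := R_CompleteNormedModule)), ex_RInt_continuity, Hf.
  - apply continuity_pt_filterlim, Hf.
Qed.

Lemma dl_scaled_primitive lam h alpha : continuity h ->
  (forall t, exists w, RInt_val h 0 t w /\ alpha t = lam * w) ->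
  forall t, derivable_pt_lim alpha t (lam * h t).
Proof.
  intros Ch Halpha t; apply (dl_ext (fun t => lam * RInt h 0 t)).
  { intros s; destruct (Halpha s) as [w [Hw ->]]; rewrite (RInt_val_RInt _ _ _ _ Hw); reflexivity. }
  eapply dl_eq; [apply dl_mult; [apply dl_const | apply dl_RInt, Ch]|]; cbv beta; ring.
Qed.

Lemma RInt_lin f g k1 k2 a b : continuity f -> continuity g ->
  RInt (fun z => k1 * f z + k2 * g z) a b = k1 * RInt f a b + k2 * RInt g a b.
Proof.
  intros Hf Hg; apply (is_RInt_unique (V := R_CompleteNormedModule)).
  apply (is_RInt_plus (fun z => k1 * f z) (fun z => k2 * g z));
    apply (is_RInt_scal (V := R_CompleteNormedModule)),
      (RInt_correct (V := R_CompleteNormedModule)), ex_RInt_continuity; auto.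
Qed.

(* Stated at type [R] rather than Coquelicot's module carrier, so that [ring] and
   [field] still recognise the rewritten integrals. *)
Lemma RInt_ext_R (f g : R -> R) a b :
  (forall x, Rmin a b < x < Rmax a b -> f x = g x) -> RInt f a b = RInt g a b.
Proof. apply RInt_ext. Qed.

Lemma RInt_Chasles_continuity f a b c : continuity f -> RInt f a b + RInt f b c = RInt f a c.
Proof. intros Hf; apply (RInt_Chasles f a b c); apply ex_RInt_continuity, Hf. Qed.

Lemma RInt_from_0 f a b : continuity f -> RInt f 0 b - RInt f 0 a = RInt f a b.
Proof. intros Hf; rewrite <- (RInt_Chasles_continuity f 0 a b Hf); ring. Qed.

Lemma dl_comp_unique h f k h1 f1 k1 t : (forall s, h (f s) = k s) ->
  derivable_pt_lim h (f t) h1 -> derivable_pt_lim f t f1 -> derivable_pt_lim k t k1 ->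
  h1 * f1 = k1.
Proof.
  intros E Hh Hf Hk; apply (uniqueness_limite (fun s => h (f s)) t); [apply dl_comp; auto|].
  apply (dl_ext k); auto.
Qed.

(** * The integral operator [T] *)

Definition tail_lim (F : R -> R -> R) (v : R) : Prop :=
  forall eps, eps > 0 -> exists M, forall a b, a <= - M -> M <= b -> Rabs (F a b - v) < eps.

Lemma improper_integral_tail_lim f v :
  improper_integral f v -> tail_lim (fun a b => RInt f a b) v.
Proof.
  intros H eps He; destruct (H eps He) as [M HM]; exists M; intros a b Ha Hb.
  destruct (HM a b Ha Hb) as [w [Hw Hwv]]; rewrite <- (RInt_val_RInt _ _ _ _ Hw); exact Hwv.
Qed.

Lemma tail_lim_const c : tail_lim (fun _ _ => c) c.
Proof. intros eps He; exists 0; intros; rewrite Rminus_diag, Rabs_R0; exact He. Qed.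

Lemma tail_lim_eventually_ext F G v :
  (exists M0, forall a b, a <= - M0 -> M0 <= b -> F a b = G a b) ->
  tail_lim F v -> tail_lim G v.
Proof.
  intros [M0 HM0] HF eps He; destruct (HF eps He) as [M HM].
  exists (Rabs M0 + Rabs M); intros a b Ha Hb.
  pose proof (Rle_abs M0); pose proof (Rle_abs M).
  pose proof (Rabs_pos M0); pose proof (Rabs_pos M).
  rewrite <- HM0 by lra; apply HM; lra.
Qed.

Lemma tail_lim_lin F G u v k1 k2 : tail_lim F u -> tail_lim G v ->
  tail_lim (fun a b => k1 * F a b + k2 * G a b) (k1 * u + k2 * v).
Proof.
  intros HF HG eps He.
  set (K := Rabs k1 + Rabs k2 + 1).
  assert (HK : K > 0) by (unfold K; pose proof (Rabs_pos k1); pose proof (Rabs_pos k2); lra).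
  destruct (HF (eps / K)) as [M1 HM1]; [apply Rdiv_lt_0_compat; lra|].
  destruct (HG (eps / K)) as [M2 HM2]; [apply Rdiv_lt_0_compat; lra|].
  exists (Rabs M1 + Rabs M2); intros a b Ha Hb.
  pose proof (Rle_abs M1); pose proof (Rle_abs M2).
  pose proof (Rabs_pos M1); pose proof (Rabs_pos M2).
  assert (E1 : Rabs (F a b - u) < eps / K) by (apply HM1; lra).
  assert (E2 : Rabs (G a b - v) < eps / K) by (apply HM2; lra).
  replace (k1 * F a b + k2 * G a b - (k1 * u + k2 * v))
    with (k1 * (F a b - u) + k2 * (G a b - v)) by ring.
  eapply Rle_lt_trans; [apply Rabs_triang|]; rewrite !Rabs_mult.
  pose proof (Rabs_pos k1); pose proof (Rabs_pos k2).
  assert (Rabs k1 * Rabs (F a b - u) <= Rabs k1 * (eps / K)) by (apply Rmult_le_compat_l; lra).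
  assert (Rabs k2 * Rabs (G a b - v) <= Rabs k2 * (eps / K)) by (apply Rmult_le_compat_l; lra).
  apply Rle_lt_trans with ((Rabs k1 + Rabs k2) * (eps / K)); [lra|].
  replace eps with (K * (eps / K)) at 2 by (field; lra).
  apply Rmult_lt_compat_r; [apply Rdiv_lt_0_compat|unfold K]; lra.
Qed.

Lemma tail_lim_unique F u v : tail_lim F u -> tail_lim F v -> u = v.
Proof.
  intros Hu Hv; destruct (Req_dec u v) as [|Hne]; auto; exfalso.
  assert (He : Rabs (u - v) / 2 > 0) by (apply Rdiv_lt_0_compat; [apply Rabs_pos_lt|]; lra).
  destruct (Hu _ He) as [M1 HM1]; destruct (Hv _ He) as [M2 HM2].
  set (N := Rabs M1 + Rabs M2).
  pose proof (Rle_abs M1); pose proof (Rle_abs M2).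
  pose proof (Rabs_pos M1); pose proof (Rabs_pos M2).
  specialize (HM1 (- N) N ltac:(unfold N; lra) ltac:(unfold N; lra)).
  specialize (HM2 (- N) N ltac:(unfold N; lra) ltac:(unfold N; lra)).
  revert HM1 HM2; split_Rabs; lra.
Qed.

Definition cos_moment (lam : R) (sigma : R -> R) (y : R) : R :=
  RInt (fun z => cos (2 * lam * z) * sigma z) 0 y.
Definition sin_moment (lam : R) (sigma : R -> R) (y : R) : R :=
  RInt (fun z => sin (2 * lam * z) * sigma z) 0 y.

Section Resolvent.

Variables (lam : R) (sigma : R -> R).
Hypotheses (Hlam : lam > 0) (Hsigma : continuity sigma).

Local Notation P := (cos_moment lam sigma).
Local Notation Q := (sin_moment lam sigma).
Local Notation kernel y := (fun z => 1 / (4 * lam) * sin (2 * lam * Rabs (y - z)) * sigma z).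

Lemma kernel_RInt_moments y a b : a <= y <= b ->
  4 * lam * RInt (kernel y) a b =
  sin (2 * lam * y) * (2 * P y - P a - P b) - cos (2 * lam * y) * (2 * Q y - Q a - Q b).
Proof.
  intros Hy.
  assert (Cc : continuity (fun z => cos (2 * lam * z) * sigma z)) by (intro; cont_auto).
  assert (Cs : continuity (fun z => sin (2 * lam * z) * sigma z)) by (intro; cont_auto).
  assert (Ck : continuity (kernel y)) by (intro; cont_auto).
  rewrite <- (RInt_Chasles_continuity _ a y b Ck).
  rewrite (RInt_ext_R _ (fun z => / (4 * lam) * sin (2 * lam * y) * (cos (2 * lam * z) * sigma z)
      + - / (4 * lam) * cos (2 * lam * y) * (sin (2 * lam * z) * sigma z)) a y).
  2:{ intros z [_ Hz]; rewrite Rmax_right in Hz by lra; rewrite Rabs_right by lra.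
      replace (2 * lam * (y - z)) with (2 * lam * y - 2 * lam * z) by ring.
      rewrite sin_minus; field; lra. }
  rewrite (RInt_ext_R _ (fun z => - / (4 * lam) * sin (2 * lam * y) * (cos (2 * lam * z) * sigma z)
      + / (4 * lam) * cos (2 * lam * y) * (sin (2 * lam * z) * sigma z)) y b).
  2:{ intros z [Hz _]; rewrite Rmin_left in Hz by lra; rewrite Rabs_left by lra.
      replace (2 * lam * - (y - z)) with (2 * lam * z - 2 * lam * y) by ring.
      rewrite sin_minus; field; lra. }
  rewrite !RInt_lin by auto.
  rewrite <- (RInt_from_0 _ a y Cc), <- (RInt_from_0 _ a y Cs).
  rewrite <- (RInt_from_0 _ y b Cc), <- (RInt_from_0 _ y b Cs).
  unfold cos_moment, sin_moment; field; lra.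
Qed.

(* By [kernel_RInt_moments], [4 lam delta y - 2 s P y + 2 c Q y] is the limit of
   the tails [- s (P a + P b) + c (Q a + Q b)], where [(s, c)] is the sine and
   cosine of [2 lam y]. Taking [y] with [(s, c) = (1, 0)] and [(0, 1)] shows that
   the limits of [P a + P b] and [Q a + Q b] exist separately. *)
Lemma resolvent_moment_form delta :
  (forall y, improper_integral (kernel y) (delta y)) ->
  exists K1 K2, forall y,
    4 * lam * delta y = sin (2 * lam * y) * (2 * P y + K1) - cos (2 * lam * y) * (2 * Q y + K2).
Proof.
  intros Hdelta.
  set (tail := fun y a b => - sin (2 * lam * y) * (P a + P b) + cos (2 * lam * y) * (Q a + Q b)).
  set (L := fun y =>
    4 * lam * delta y - (sin (2 * lam * y) * (2 * P y) - cos (2 * lam * y) * (2 * Q y))).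
  assert (Htail : forall y, tail_lim (tail y) (L y)).
  { intros y; set (m := sin (2 * lam * y) * (2 * P y) - cos (2 * lam * y) * (2 * Q y)).
    replace (L y) with (4 * lam * delta y + - m * 1) by (unfold L, m; ring).
    apply tail_lim_eventually_ext with (fun a b => 4 * lam * RInt (kernel y) a b + - m * 1).
    - exists (Rabs y); intros a b Ha Hb.
      rewrite kernel_RInt_moments by (split_Rabs; lra); unfold tail, m; ring.
    - apply (tail_lim_lin (fun a b => RInt (kernel y) a b) (fun _ _ => 1));
        [apply improper_integral_tail_lim, Hdelta | apply tail_lim_const]. }
  set (y1 := PI / (4 * lam)).
  assert (E1 : 2 * lam * y1 = PI / 2) by (unfold y1; field; lra).
  exists (L y1), (- L 0); intros y.
  assert (HL : L y = sin (2 * lam * y) * L y1 + cos (2 * lam * y) * L 0).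
  { apply (tail_lim_unique (tail y)); [apply Htail|].
    apply tail_lim_eventually_ext
      with (fun a b => sin (2 * lam * y) * tail y1 a b + cos (2 * lam * y) * tail 0 a b).
    - exists 0; intros a b _ _; unfold tail.
      rewrite E1, sin_PI2, cos_PI2, Rmult_0_r, sin_0, cos_0; ring.
    - apply tail_lim_lin; apply Htail. }
  unfold L at 1 in HL; lra.
Qed.

Lemma dl_cos_moment y : derivable_pt_lim P y (cos (2 * lam * y) * sigma y).
Proof. apply (dl_RInt (fun z => cos (2 * lam * z) * sigma z)); intro; cont_auto. Qed.
Lemma dl_sin_moment y : derivable_pt_lim Q y (sin (2 * lam * y) * sigma y).
Proof. apply (dl_RInt (fun z => sin (2 * lam * z) * sigma z)); intro; cont_auto. Qed.

Lemma resolvent_second_deriv delta delta1 :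
  (forall y, improper_integral (kernel y) (delta y)) -> is_deriv delta delta1 ->
  is_deriv delta1 (fun y => sigma y - 4 * lam ^ 2 * delta y).
Proof.
  intros Hdelta Hd1; destruct (resolvent_moment_form delta Hdelta) as [K1 [K2 HK]].
  pose proof dl_cos_moment as DP; pose proof dl_sin_moment as DQ.
  set (D1 := fun y => cos (2 * lam * y) * (P y + K1 / 2) + sin (2 * lam * y) * (Q y + K2 / 2)).
  assert (Hdelta1 : forall y, delta1 y = D1 y).
  { intros y; apply (uniqueness_limite delta y); [apply Hd1|].
    apply (dl_ext (fun t => / (4 * lam) *
      (sin (2 * lam * t) * (2 * P t + K1) - cos (2 * lam * t) * (2 * Q t + K2)))).
    { intros t; rewrite <- HK; field; lra. }
    eapply dl_eq; [dl_auto|]; unfold D1; field; lra. }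
  intros y; apply (dl_ext D1); [intros; symmetry; apply Hdelta1|].
  eapply dl_eq; [unfold D1; dl_auto|].
  pose proof (sin2_cos2 (2 * lam * y)) as Hsc; unfold Rsqr in Hsc.
  assert (Hd : delta y = / (4 * lam) *
    (sin (2 * lam * y) * (2 * P y + K1) - cos (2 * lam * y) * (2 * Q y + K2)))
    by (rewrite <- HK; field; lra).
  rewrite Hd; transitivity (sigma y * (sin (2 * lam * y) * sin (2 * lam * y)
    + cos (2 * lam * y) * cos (2 * lam * y)) - lam * (sin (2 * lam * y) * (2 * P y + K1)
    - cos (2 * lam * y) * (2 * Q y + K2))); [field | rewrite Hsc; field; lra].
Qed.

End Resolvent.

(** * The Liouville change of variables *)

Lemma smooth_deriv2_continuity q q1 q2 :
  smooth q -> is_deriv q q1 -> is_deriv q1 q2 -> continuity q2.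
Proof.
  intros [D [D0 HD]] H1 H2.
  assert (E1 : D 1%nat = q1).
  { apply functional_extensionality; intros x; apply (uniqueness_limite q x); [|apply H1].
    rewrite <- D0; apply HD. }
  assert (E2 : D 2%nat = q2).
  { apply functional_extensionality; intros x; apply (uniqueness_limite q1 x); [|apply H2].
    rewrite <- E1; apply HD. }
  intros x; rewrite <- E2; apply (cont_of_dl _ _ _ (HD 2%nat x)).
Qed.

Section Liouville.

Variables (q q1 q2 xf tinv t1 t2 t3 : R -> R).
Hypotheses (Hqpos : forall t, q t > 0) (Hq1 : is_deriv q q1) (Hq2 : is_deriv q1 q2)
  (Hx : forall t, RInt_val (fun u => sqrt (q u)) 0 t (xf t))
  (Htx : forall t, tinv (xf t) = t)
  (Ht1 : is_deriv tinv t1) (Ht2 : is_deriv t1 t2) (Ht3 : is_deriv t2 t3).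

Lemma dl_sqrt_q t : derivable_pt_lim (fun s => sqrt (q s)) t (/ (2 * sqrt (q t)) * q1 t).
Proof. apply dl_sqrt; [apply Hq1 | apply Hqpos]. Qed.

Lemma dl_liouville_var t : derivable_pt_lim xf t (sqrt (q t)).
Proof.
  apply (dl_ext (fun t => RInt (fun u => sqrt (q u)) 0 t)).
  { intros s; symmetry; apply RInt_val_RInt, Hx. }
  apply (dl_RInt (fun u => sqrt (q u))); intros u; apply (cont_of_dl _ _ _ (dl_sqrt_q u)).
Qed.

Lemma inverse_deriv1 t : t1 (xf t) = / sqrt (q t).
Proof.
  assert (H : t1 (xf t) * sqrt (q t) = 1).
  { apply (dl_comp_unique tinv xf (fun s => s) _ _ _ t Htx);
      [apply Ht1 | apply dl_liouville_var | apply dl_id]. }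
  sqrt_subst (q t) (Hqpos t); apply (Rmult_eq_reg_r s); [rewrite H; field|]; lra.
Qed.

Lemma inverse_deriv2 t : t2 (xf t) = - q1 t / (2 * q t ^ 2).
Proof.
  assert (H : t2 (xf t) * sqrt (q t) = - (/ (2 * sqrt (q t)) * q1 t) / sqrt (q t) ^ 2).
  { apply (dl_comp_unique t1 xf (fun s => / sqrt (q s)) _ _ _ t inverse_deriv1);
      [apply Ht2 | apply dl_liouville_var | apply (dl_inv (fun s => sqrt (q s)))].
    - apply dl_sqrt_q.
    - apply Rgt_not_eq, sqrt_lt_R0, Hqpos. }
  sqrt_subst (q t) (Hqpos t); apply (Rmult_eq_reg_r s); [rewrite H; field|]; lra.
Qed.

Lemma inverse_deriv3 t :
  t3 (xf t) = (- q2 t / (2 * q t ^ 2) + q1 t * q1 t / q t ^ 3) / sqrt (q t).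
Proof.
  assert (H : t3 (xf t) * sqrt (q t) = - q2 t / (2 * q t ^ 2) + q1 t * q1 t / q t ^ 3).
  { apply (dl_comp_unique t2 xf (fun s => - q1 s / (2 * q s ^ 2)) _ _ _ t inverse_deriv2);
      [apply Ht3 | apply dl_liouville_var |].
    apply (dl_ext (fun s => - q1 s * / (2 * (q s * q s)))).
    { intros s; unfold Rdiv; do 2 f_equal; ring. }
    eapply dl_eq; [apply dl_mult; [apply dl_opp, Hq2 | apply dl_inv; [dl_auto|]]|].
    - pose proof (Hqpos t); nra.
    - pose proof (Hqpos t); cbv beta; field; lra. }
  pose proof (sqrt_lt_R0 _ (Hqpos t)); rewrite <- H; field; lra.
Qed.

Lemma schwarzian_inverse_liouville t :
  2 * schwarzian t1 t2 t3 (xf t) = 1 / q t * (5 / 4 * (q1 t / q t) ^ 2 - q2 t / q t).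
Proof.
  unfold schwarzian; rewrite inverse_deriv1, inverse_deriv2, inverse_deriv3.
  sqrt_subst (q t) (Hqpos t); field; lra.
Qed.

Lemma liouville_comp_derivs f f1 f2 :
  is_deriv f f1 -> is_deriv f1 f2 -> continuity f2 ->
  exists e1 e2, is_deriv (fun t => f (xf t)) e1 /\ is_deriv e1 e2 /\ continuity e2 /\
    forall t, e1 t = sqrt (q t) * f1 (xf t) /\ e2 t - q1 t / (2 * q t) * e1 t = q t * f2 (xf t).
Proof.
  intros Hf1 Hf2 Cf2.
  exists (fun t => sqrt (q t) * f1 (xf t)),
         (fun t => / (2 * sqrt (q t)) * q1 t * f1 (xf t) + q t * f2 (xf t)).
  pose proof dl_sqrt_q as DS; pose proof dl_liouville_var as DX.
  repeat split.
  - intros t; eapply dl_eq; [apply dl_comp; [apply DX | apply Hf1]|]; ring.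
  - intros t; eapply dl_eq; [apply dl_mult; [apply DS | apply dl_comp; [apply DX | apply Hf2]]|].
    sqrt_subst (q t) (Hqpos t); ring.
  - intros t; pose proof (sqrt_lt_R0 _ (Hqpos t)).
    assert (Cxf : continuity xf) by (intros s; apply (cont_of_dl _ _ _ (DX s))).
    apply cont_plus; apply cont_mult.
    + apply cont_mult;
        [apply (cont_inv (fun s => 2 * sqrt (q s))) | apply (cont_of_dl _ _ _ (Hq2 t))].
      * apply cont_mult; [apply cont_const | apply (cont_of_dl _ _ _ (DS t))].
      * lra.
    + apply cont_comp; [apply Cxf | apply (cont_of_dl _ _ _ (Hf2 _))].
    + apply (cont_of_dl _ _ _ (Hq1 t)).
    + apply cont_comp; [apply Cxf | apply Cf2].
  - sqrt_subst (q t) (Hqpos t); field; lra.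
Qed.

End Liouville.

(** * Kummer's equation *)

(* With [g] the logarithmic derivative of [alpha'], Kummer's equation reads
   [alpha'^2 = lam^2 q + g^2/4 - g'/2], and the transformed equation for [d]
   says exactly that the right-hand side equals [lam^2 q e^d]. *)
Lemma kummer_of_transformed lam q q1 q2 d d1 d2 alpha :
  lam > 0 -> (forall t, q t > 0) -> is_deriv q q1 -> is_deriv q1 q2 -> continuity q2 ->
  is_deriv d d1 -> is_deriv d1 d2 -> continuity d2 ->
  (forall t, d2 t - q1 t / (2 * q t) * d1 t - 1 / 4 * d1 t ^ 2
             + 4 * lam ^ 2 * q t * (exp (d t) - 1)
           = q t * (1 / q t * (5 / 4 * (q1 t / q t) ^ 2 - q2 t / q t))) ->
  (forall t, derivable_pt_lim alpha t (lam * (sqrt (q t) * exp (d t / 2)))) ->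
  exists a1 a2 a3, is_deriv alpha a1 /\ is_deriv a1 a2 /\ is_deriv a2 a3 /\ continuity a3 /\
    (forall t, a1 t > 0) /\
    forall t, a1 t ^ 2 = lam ^ 2 * q t - 1 / 2 * (a3 t / a1 t) + 3 / 4 * (a2 t / a1 t) ^ 2.
Proof.
  intros Hlam Hq Hq1 Hq2 Cq2 Hd1 Hd2 Cd2 Heq Halpha.
  set (a1 := fun t => lam * (sqrt (q t) * exp (d t / 2))).
  set (g := fun t => q1 t / (2 * q t) + d1 t / 2).
  set (g1 := fun t => q2 t / (2 * q t) - q1 t * q1 t / (2 * (q t * q t)) + d2 t / 2).
  assert (Hpos : forall t, a1 t > 0).
  { intros t; apply Rmult_lt_0_compat; [lra|].
    apply Rmult_lt_0_compat; [apply sqrt_lt_R0, Hq | apply exp_pos]. }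
  assert (Da1 : is_deriv a1 (fun t => a1 t * g t)).
  { intros t; unfold a1, g, Rdiv; eapply dl_eq; [dl_auto; apply Hq|].
    cbv beta; sqrt_subst (q t) (Hq t); field; lra. }
  assert (Dg : is_deriv g g1).
  { intros t; unfold g, g1, Rdiv; pose proof (Hq t).
    eapply dl_eq; [dl_auto; lra|]; cbv beta; field; lra. }
  assert (Ca1 : continuity a1) by (intros t; apply (cont_of_dl _ _ _ (Da1 t))).
  assert (Cg1 : continuity g1).
  { intros t; unfold g1, Rdiv; pose proof (Hq t); cont_auto; nra. }
  exists a1, (fun t => a1 t * g t), (fun t => a1 t * (g t * g t + g1 t)).
  split; [intros t; apply Halpha|].
  split; [exact Da1|].
  split; [intros t; eapply dl_eq; [apply dl_mult; [apply Da1 | apply Dg]|]; ring|].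
  split.
  { intros t; apply cont_mult; [apply Ca1|].
    apply cont_plus; [apply cont_mult; apply (cont_of_dl _ _ _ (Dg t)) | apply Cg1]. }
  split; [exact Hpos|].
  intros t.
  assert (Hd2t : d2 t = q1 t / (2 * q t) * d1 t + 1 / 4 * d1 t ^ 2
      - 4 * lam ^ 2 * q t * (exp (d t) - 1)
      + q t * (1 / q t * (5 / 4 * (q1 t / q t) ^ 2 - q2 t / q t))) by (rewrite <- Heq; ring).
  assert (He : exp (d t) = exp (d t / 2) * exp (d t / 2)) by (rewrite <- exp_plus; f_equal; field).
  pose proof (Hpos t); pose proof (exp_pos (d t / 2)).
  unfold a1, g, g1; rewrite Hd2t, He; sqrt_subst (q t) (Hq t); field; repeat split; nra.
Qed.

(** * Solutions on [[0, 1]] and phase functions *)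

Definition within_dom (a b t h : R) : Prop := h <> 0 /\ a <= t + h <= b.

Lemma limit1_in_ext f g D l x0 :
  (forall x, D x -> f x = g x) -> limit1_in f D l x0 -> limit1_in g D l x0.
Proof.
  intros E H eps He; destruct (H eps He) as [d [Hd Hx]]; exists d; split; auto.
  intros x [Dx Hdx]; rewrite <- E by exact Dx; apply Hx; auto.
Qed.

Lemma limit1_in_const c D x0 : limit1_in (fun _ => c) D c x0.
Proof. exact (limit_free (fun _ => c) D x0 x0). Qed.

Lemma deriv_within_quotient_limit a b f f' t : deriv_within a b f f' -> a <= t <= b ->
  limit1_in (fun h => (f (t + h) - f t) / h) (within_dom a b t) (f' t) 0.
Proof.
  intros H Ht eps He; destruct (H t Ht eps He) as [d [Hd Hq]]; exists d; split; auto.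
  unfold within_dom; simpl; unfold R_dist; intros h [[Hh Hin] Hhd].
  rewrite Rminus_0_r in Hhd; auto.
Qed.

Lemma deriv_within_of_quotient_limit a b f f' :
  (forall t, a <= t <= b ->
    limit1_in (fun h => (f (t + h) - f t) / h) (within_dom a b t) (f' t) 0) ->
  deriv_within a b f f'.
Proof.
  intros H t Ht eps He; destruct (H t Ht eps He) as [d [Hd Hq]]; exists d; split; auto.
  intros h Hh Hhd Hin; apply (Hq h); unfold within_dom; simpl; unfold R_dist.
  rewrite Rminus_0_r; auto.
Qed.

Lemma deriv_within_shift_limit a b f f' t : deriv_within a b f f' -> a <= t <= b ->
  limit1_in (fun h => f (t + h)) (within_dom a b t) (f t) 0.
Proof.
  intros Hf Ht; replace (f t) with (f t + 0 * f' t) at 1 by ring.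
  apply limit1_in_ext with (fun h => f t + h * ((f (t + h) - f t) / h)).
  { intros h [Hh _]; field; exact Hh. }
  apply limit_plus; [apply limit1_in_const | apply limit_mul; [apply lim_x|]].
  apply (deriv_within_quotient_limit a b); auto.
Qed.

Lemma deriv_within_of_is_deriv a b f f' : is_deriv f f' -> deriv_within a b f f'.
Proof.
  intros H t _ eps He; destruct (H t eps He) as [d Hd]; exists d.
  split; [apply cond_pos | intros h Hh Hhd _; apply Hd; auto].
Qed.

Lemma deriv_within_mult a b f f' g g' : deriv_within a b f f' -> deriv_within a b g g' ->
  deriv_within a b (fun t => f t * g t) (fun t => f' t * g t + f t * g' t).
Proof.
  intros Hf Hg; apply deriv_within_of_quotient_limit; intros t Ht.
  apply limit1_in_ext
    with (fun h => (f (t + h) - f t) / h * g (t + h) + f t * ((g (t + h) - g t) / h)).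
  { intros h [Hh _]; field; exact Hh. }
  apply limit_plus; apply limit_mul.
  - apply (deriv_within_quotient_limit a b); auto.
  - apply (deriv_within_shift_limit a b g g'); auto.
  - apply limit1_in_const.
  - apply (deriv_within_quotient_limit a b); auto.
Qed.

Lemma deriv_within_lin a b f f' g g' c1 c2 : deriv_within a b f f' -> deriv_within a b g g' ->
  deriv_within a b (fun t => c1 * f t + c2 * g t) (fun t => c1 * f' t + c2 * g' t).
Proof.
  intros Hf Hg; apply deriv_within_of_quotient_limit; intros t Ht.
  apply limit1_in_ext with (fun h => c1 * ((f (t + h) - f t) / h) + c2 * ((g (t + h) - g t) / h)).
  { intros h [Hh _]; field; exact Hh. }
  apply limit_plus; apply limit_mul; try apply limit1_in_const;
    apply (deriv_within_quotient_limit a b); auto.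
Qed.

Lemma within_dom_adherent a b t : a < b -> a <= t <= b -> adhDa (within_dom a b t) 0.
Proof.
  intros Hab Ht alp Halp; set (h := Rmin alp (b - a) / 2).
  assert (Hh : 0 < h < alp /\ h <= (b - a) / 2).
  { assert (0 < Rmin alp (b - a)) by (apply Rmin_pos; lra).
    pose proof (Rmin_l alp (b - a)); pose proof (Rmin_r alp (b - a)); unfold h; lra. }
  unfold within_dom, R_dist; destruct (Rle_dec t ((a + b) / 2)).
  - exists h; rewrite Rminus_0_r, Rabs_right; lra.
  - exists (- h); rewrite Rminus_0_r, Rabs_left; lra.
Qed.

Lemma deriv_within_of_vanishing a b f f' : a < b -> deriv_within a b f f' ->
  (forall t, a <= t <= b -> f t = 0) -> forall t, a <= t <= b -> f' t = 0.
Proof.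
  intros Hab Hf H0 t Ht.
  apply (single_limit (fun h => (f (t + h) - f t) / h) (within_dom a b t) _ _ 0).
  - apply within_dom_adherent; auto.
  - apply (deriv_within_quotient_limit a b); auto.
  - apply limit1_in_ext with (fun _ => 0); [|apply limit1_in_const].
    intros h [Hh Hin]; rewrite !H0 by auto; field; exact Hh.
Qed.

Definition clamp (a b x : R) : R := Rmax a (Rmin b x).

Lemma clamp_in a b x : a <= b -> a <= clamp a b x <= b.
Proof. intros; unfold clamp, Rmax, Rmin; repeat destruct Rle_dec; lra. Qed.
Lemma clamp_id a b x : a <= x <= b -> clamp a b x = x.
Proof. intros; unfold clamp, Rmax, Rmin; repeat destruct Rle_dec; lra. Qed.
Lemma clamp_lip a b x y : a <= b -> Rabs (clamp a b x - clamp a b y) <= Rabs (x - y).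
Proof. intros; unfold clamp, Rmax, Rmin; repeat destruct Rle_dec; split_Rabs; lra. Qed.

(* [f] extended by constants outside [[a, b]] is continuous on [R] and has zero
   derivative on [(a, b)], so the mean value theorem in [null_derivative_loc] applies. *)
Lemma deriv_within_zero_const a b f f' : a < b -> deriv_within a b f f' ->
  (forall t, a <= t <= b -> f' t = 0) -> forall t, a <= t <= b -> f t = f a.
Proof.
  intros Hab Hf H0; set (g := fun x => f (clamp a b x)).
  assert (Dg : forall x, a < x < b -> derivable_pt_lim g x 0).
  { intros x Hx eps He; destruct (Hf x ltac:(lra) eps He) as [d [Hd Hq]].
    assert (Hp : Rmin d (Rmin (x - a) (b - x)) > 0) by (repeat apply Rmin_pos; lra).
    exists (mkposreal _ Hp); intros h Hh Hhd; simpl in Hhd.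
    pose proof (Rmin_l d (Rmin (x - a) (b - x))); pose proof (Rmin_r d (Rmin (x - a) (b - x))).
    pose proof (Rmin_l (x - a) (b - x)); pose proof (Rmin_r (x - a) (b - x)).
    assert (a <= x + h <= b) by (split_Rabs; lra).
    unfold g; rewrite !clamp_id by lra; rewrite <- (H0 x) by lra; apply Hq; auto; lra. }
  assert (Cg : forall x, continuity_pt g x).
  { intros x eps He; pose proof (clamp_in a b x ltac:(lra)) as Hc.
    destruct (deriv_within_shift_limit a b f f' _ Hf Hc eps He) as [d [Hd Hlim]].
    exists d; split; auto; intros y [_ Hy]; simpl in *; unfold R_dist in *; unfold g.
    destruct (Req_dec (clamp a b y) (clamp a b x)) as [E|Hne].
    { rewrite E, Rminus_diag, Rabs_R0; lra. }
    replace (clamp a b y) with (clamp a b x + (clamp a b y - clamp a b x)) by ring.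
    apply Hlim; unfold within_dom; rewrite Rminus_0_r.
    replace (clamp a b x + (clamp a b y - clamp a b x)) with (clamp a b y) by ring.
    pose proof (clamp_in a b y ltac:(lra)); pose proof (clamp_lip a b y x ltac:(lra)).
    repeat split; try lra. }
  intros t Ht.
  pose proof (null_derivative_loc g a b (fun x Hx => exist _ 0 (Dg x Hx)) (fun x _ => Cg x)
    (fun x Hx => eq_refl) t Ht) as Hn.
  unfold g in Hn; rewrite !clamp_id in Hn by lra; exact Hn.
Qed.

Lemma sol01_wronskian_const lam q y y1 y2 z z1 z2 :
  deriv_within 0 1 y y1 -> deriv_within 0 1 y1 y2 ->
  (forall t, 0 <= t <= 1 -> y2 t + lam ^ 2 * q t * y t = 0) ->
  deriv_within 0 1 z z1 -> deriv_within 0 1 z1 z2 ->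
  (forall t, 0 <= t <= 1 -> z2 t + lam ^ 2 * q t * z t = 0) ->
  forall t, 0 <= t <= 1 -> y t * z1 t - y1 t * z t = y 0 * z1 0 - y1 0 * z 0.
Proof.
  intros Hy1 Hy2 Hy Hz1 Hz2 Hz t Ht.
  pose proof (deriv_within_lin 0 1 _ _ _ _ 1 (-1)
    (deriv_within_mult 0 1 _ _ _ _ Hy1 Hz2) (deriv_within_mult 0 1 _ _ _ _ Hy2 Hz1)) as HW.
  assert (H0 : forall s, 0 <= s <= 1 ->
    1 * (y1 s * z1 s + y s * z2 s) + -1 * (y2 s * z s + y1 s * z1 s) = 0).
  { intros s Hs; pose proof (Hy s Hs); pose proof (Hz s Hs).
    replace (z2 s) with (- (lam ^ 2 * q s * z s)) by lra.
    replace (y2 s) with (- (lam ^ 2 * q s * y s)) by lra; ring. }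
  pose proof (deriv_within_zero_const 0 1 _ _ ltac:(lra) HW H0 t Ht) as HC; cbv beta in HC; lra.
Qed.

Lemma unit_wronskian_basis01 lam q U u1 u2 V v1 v2 :
  is_deriv U u1 -> is_deriv u1 u2 -> is_deriv V v1 -> is_deriv v1 v2 ->
  (forall t, 0 <= t <= 1 -> u2 t + lam ^ 2 * q t * U t = 0) ->
  (forall t, 0 <= t <= 1 -> v2 t + lam ^ 2 * q t * V t = 0) ->
  (forall t, 0 <= t <= 1 -> U t * v1 t - u1 t * V t = 1) ->
  basis01 lam q U V.
Proof.
  intros HU1 HU2 HV1 HV2 HU HV HW.
  pose proof (deriv_within_of_is_deriv 0 1 _ _ HU1) as WU1.
  pose proof (deriv_within_of_is_deriv 0 1 _ _ HU2) as WU2.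
  pose proof (deriv_within_of_is_deriv 0 1 _ _ HV1) as WV1.
  pose proof (deriv_within_of_is_deriv 0 1 _ _ HV2) as WV2.
  split; [exists u1, u2; auto|split; [exists v1, v2; auto|split]].
  - intros c1 c2 H0.
    pose proof (deriv_within_of_vanishing 0 1 _ _ ltac:(lra)
      (deriv_within_lin 0 1 _ _ _ _ c1 c2 WU1 WV1) H0 0 ltac:(lra)) as H1; cbv beta in H1.
    specialize (H0 0 ltac:(lra)); specialize (HW 0 ltac:(lra)).
    split.
    + replace c1 with (v1 0 * (c1 * U 0 + c2 * V 0) - V 0 * (c1 * u1 0 + c2 * v1 0))
        by (transitivity (c1 * (U 0 * v1 0 - u1 0 * V 0)); [ring | rewrite HW; ring]).
      rewrite H0, H1; ring.
    + replace c2 with (U 0 * (c1 * u1 0 + c2 * v1 0) - u1 0 * (c1 * U 0 + c2 * V 0))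
        by (transitivity (c2 * (U 0 * v1 0 - u1 0 * V 0)); [ring | rewrite HW; ring]).
      rewrite H0, H1; ring.
  - intros y [y1 [y2 [Hy1 [Hy2 Hy]]]].
    exists (y 0 * v1 0 - y1 0 * V 0), (U 0 * y1 0 - u1 0 * y 0); intros t Ht.
    rewrite <- (sol01_wronskian_const lam q y y1 y2 V v1 v2 Hy1 Hy2 Hy WV1 WV2 HV t Ht).
    rewrite <- (sol01_wronskian_const lam q U u1 u2 y y1 y2 WU1 WU2 HU Hy1 Hy2 Hy t Ht).
    transitivity (y t * (U t * v1 t - u1 t * V t)); [rewrite (HW t Ht); ring | ring].
Qed.

(* The amplitude [m = alpha'^(-1/2)] satisfies [m'' = (alpha'^2 - lam^2 q) m]
   by Kummer's equation, while [(alpha' m^2)' = 0] kills the cross terms, so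
   [cos alpha * m] and [sin alpha * m] solve the equation with Wronskian
   [alpha' m^2 = 1]. *)
Lemma kummer_phase_function lam q alpha a1 a2 a3 :
  is_deriv alpha a1 -> is_deriv a1 a2 -> is_deriv a2 a3 -> (forall t, a1 t > 0) ->
  (forall t, a1 t ^ 2 = lam ^ 2 * q t - 1 / 2 * (a3 t / a1 t) + 3 / 4 * (a2 t / a1 t) ^ 2) ->
  phase_function lam q alpha.
Proof.
  intros Ha1 Ha2 Ha3 Hpos Hk; exists a1; split; [exact Ha1|].
  set (m := fun t => / sqrt (a1 t)).
  set (m1 := fun t => - a2 t / (2 * a1 t) * m t).
  set (m2 := fun t => (- 1 / 2 * (a3 t / a1 t) + 3 / 4 * (a2 t / a1 t) ^ 2) * m t).
  assert (Hm : forall t, a1 t * (m t * m t) = 1).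
  { intros t; unfold m; sqrt_subst (a1 t) (Hpos t); field; lra. }
  assert (Dm : is_deriv m m1).
  { intros t; unfold m1, m; eapply dl_eq; [dl_auto; [apply Hpos | ]|].
    - apply Rgt_not_eq, sqrt_lt_R0, Hpos.
    - pose proof (Hpos t); sqrt_subst (a1 t) (Hpos t); field; lra. }
  assert (Dm1 : is_deriv m1 m2).
  { intros t; unfold m1, m2, Rdiv; pose proof (Hpos t).
    eapply dl_eq; [dl_auto; lra|]; cbv beta; unfold m1; field; lra. }
  set (U := fun t => cos (alpha t) * m t); set (V := fun t => sin (alpha t) * m t).
  set (u1 := fun t => - sin (alpha t) * a1 t * m t + cos (alpha t) * m1 t).
  set (v1 := fun t => cos (alpha t) * a1 t * m t + sin (alpha t) * m1 t).
  set (u2 := fun t => cos (alpha t) * (m2 t - a1 t * a1 t * m t)).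
  set (v2 := fun t => sin (alpha t) * (m2 t - a1 t * a1 t * m t)).
  assert (Hm2 : forall t, m2 t - a1 t * a1 t * m t = - (lam ^ 2 * q t * m t))
    by (intros t; unfold m2; replace (a1 t * a1 t) with (a1 t ^ 2) by ring;
        rewrite Hk; pose proof (Hpos t); field; lra).
  assert (Hrew : forall t, Rabs (a1 t) = a1 t) by (intros t; apply Rabs_right; left; apply Hpos).
  replace (fun t => cos (alpha t) / sqrt (Rabs (a1 t))) with U
    by (apply functional_extensionality; intros t; rewrite Hrew; reflexivity).
  replace (fun t => sin (alpha t) / sqrt (Rabs (a1 t))) with V
    by (apply functional_extensionality; intros t; rewrite Hrew; reflexivity).
  apply (unit_wronskian_basis01 lam q U u1 u2 V v1 v2).
  - intros t; unfold U, u1; eapply dl_eq; [dl_auto|]; cbv beta; ring.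
  - intros t; unfold u1, u2; pose proof (Hpos t).
    eapply dl_eq; [dl_auto|]; cbv beta; unfold m1; field; lra.
  - intros t; unfold V, v1; eapply dl_eq; [dl_auto|]; cbv beta; ring.
  - intros t; unfold v1, v2; pose proof (Hpos t).
    eapply dl_eq; [dl_auto|]; cbv beta; unfold m1; field; lra.
  - intros t _; unfold u2, U; rewrite Hm2; ring.
  - intros t _; unfold v2, V; rewrite Hm2; ring.
  - intros t _; unfold U, V, u1, v1.
    pose proof (sin2_cos2 (alpha t)) as Hsc; unfold Rsqr in Hsc.
    transitivity (a1 t * (m t * m t)
      * (sin (alpha t) * sin (alpha t) + cos (alpha t) * cos (alpha t)));
      [ring | rewrite Hm, Hsc; ring].
Qed.

Theorem theorem3p2
  (lam : R) (Hlam : lam > 0)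
  (q q1 q2 : R -> R) (Hqs : smooth q) (Hqpos : forall t, q t > 0)
  (Hq1 : is_deriv q q1) (Hq2 : is_deriv q1 q2)
  (xf : R -> R) (Hx : forall t, RInt_val (fun u => sqrt (q u)) 0 t (xf t))
  (tinv : R -> R) (Htx : forall t, tinv (xf t) = t) (Hxt : forall y, xf (tinv y) = y)
  (t1 t2 t3 : R -> R) (Ht1 : is_deriv tinv t1) (Ht2 : is_deriv t1 t2) (Ht3 : is_deriv t2 t3)
  (p : R -> R) (Hp : forall y, p y = 2 * schwarzian t1 t2 t3 y)
  (sigma : R -> R) (Hsc : continuity sigma) (HsL1 : L1 sigma)
  (delta delta1 : R -> R)
  (Hdelta : forall y, improper_integral
              (fun z => 1 / (4 * lam) * sin (2 * lam * Rabs (y - z)) * sigma z) (delta y))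
  (Hdelta1 : is_deriv delta delta1)
  (Heq : forall y, sigma y = S_op lam delta delta1 y + p y)
  (alpha : R -> R)
  (Halpha : forall t, exists w,
      RInt_val (fun u => sqrt (q u) * exp (delta (xf u) / 2)) 0 t w /\ alpha t = lam * w) :
  (* (1) *)
  (exists d2, is_deriv delta1 d2 /\ continuity d2 /\
     forall y, d2 y - 1 / 4 * (delta1 y) ^ 2 + 4 * lam ^ 2 * (exp (delta y) - 1) = p y) /\
  (* (2) *)
  (exists e1 e2, is_deriv (fun t => delta (xf t)) e1 /\ is_deriv e1 e2 /\ continuity e2 /\
     forall t, e2 t - q1 t / (2 * q t) * e1 t - 1 / 4 * (e1 t) ^ 2
               + 4 * lam ^ 2 * q t * (exp (delta (xf t)) - 1)
             = q t * (1 / q t * (5 / 4 * (q1 t / q t) ^ 2 - q2 t / q t))) /\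
  (* (3) *)
  (exists a1 a2 a3, is_deriv alpha a1 /\ is_deriv a1 a2 /\ is_deriv a2 a3 /\ continuity a3 /\
     forall t, (a1 t) ^ 2 = lam ^ 2 * q t - 1 / 2 * (a3 t / a1 t) + 3 / 4 * (a2 t / a1 t) ^ 2) /\
  (* (4) *)
  phase_function lam q alpha.
Proof.
  set (d2 := fun y => sigma y - 4 * lam ^ 2 * delta y).
  assert (Hd2 : is_deriv delta1 d2) by (apply resolvent_second_deriv; auto).
  assert (Cd2 : continuity d2) by (intros y; unfold d2; cont_auto).
  assert (Eq1 : forall y, d2 y - 1 / 4 * delta1 y ^ 2 + 4 * lam ^ 2 * (exp (delta y) - 1) = p y)
    by (intros y; unfold d2; rewrite Heq; unfold S_op; ring).
  destruct (liouville_comp_derivs q q1 q2 xf Hqpos Hq1 Hq2 Hx delta delta1 d2 Hdelta1 Hd2 Cd2)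
    as [e1 [e2 [De1 [De2 [Ce2 He]]]]].
  assert (Eq2 : forall t, e2 t - q1 t / (2 * q t) * e1 t - 1 / 4 * e1 t ^ 2
      + 4 * lam ^ 2 * q t * (exp (delta (xf t)) - 1)
      = q t * (1 / q t * (5 / 4 * (q1 t / q t) ^ 2 - q2 t / q t))).
  { intros t; destruct (He t) as [He1 He2].
    rewrite <- (schwarzian_inverse_liouville q q1 q2 xf tinv t1 t2 t3), <- Hp, <- Eq1; auto.
    replace (e2 t) with (q t * d2 (xf t) + q1 t / (2 * q t) * e1 t) by lra.
    rewrite He1; sqrt_subst (q t) (Hqpos t); ring. }
  assert (Dalpha : forall t,
      derivable_pt_lim alpha t (lam * (sqrt (q t) * exp (delta (xf t) / 2)))).
  { apply dl_scaled_primitive; auto; intros u.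
    apply cont_mult; [apply (cont_of_dl _ _ _ (dl_sqrt_q q q1 Hqpos Hq1 u))|].
    apply cont_exp; unfold Rdiv; apply cont_mult; [|apply cont_const].
    apply cont_comp; [|cont_auto].
    apply (cont_of_dl _ _ _ (dl_liouville_var q q1 xf Hqpos Hq1 Hx u)). }
  destruct (kummer_of_transformed lam q q1 q2 (fun t => delta (xf t)) e1 e2 alpha Hlam Hqpos Hq1 Hq2
    (smooth_deriv2_continuity q q1 q2 Hqs Hq1 Hq2) De1 De2 Ce2 Eq2 Dalpha)
    as [a1 [a2 [a3 [Da1 [Da2 [Da3 [Ca3 [Hpos Hk]]]]]]]].
  split; [exists d2; auto|].
  split; [exists e1, e2; auto|].
  split; [exists a1, a2, a3; auto|].
  exact (kummer_phase_function lam q alpha a1 a2 a3 Da1 Da2 Da3 Hpos Hk).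
Qed.
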